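(* Let $G$ be the threshold graph given by the binary sequence $(1^{p_l},0^{z_l},1^{p_{l-1}},0^{z_{l-1}},\dots,1^{p_1},0^{z_1},1^{p_0},\star)$, where $l\ge0$, $z_1,\dots,z_l$ are positive integers and $p_0,\dots,p_l$ are nonnegative integers. Then the number of pairwise non-isomorphic transitive orientations of $G$ is $\prod_{i=1}^{l}(p_i+1)$.
   Context: A binary sequence $(s_1,\dots,s_{n-1},\star)$ with $s_i\in\{0,1\}$ determines an undirected graph read right to left: start with one vertex (for $\star$), then for $i=n-1,\dots,1$ add a vertex $v_i$ which is isolated if $s_i=0$ and adjacent to all previously added vertices if $s_i=1$; $x^k$ denotes $k$ consecutive copies of $x$. Graphs arising this way are exactly the threshold graphs. A transitive orientation of $G$ is an assignment of a direction to each edge such that $x\to y$, $y\to z$ imply $x\to z$; two orientations are isomorphic if there is a digraph isomorphism between them. *)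

From mathcomp Require Import all_boot all_fingroup.
Set Implicit Arguments. Unset Strict Implicit. Unset Printing Implicit Defensive.

(* Vertex k : 'I_(size s).+1 is the vertex for position k+1 (0-indexed):
   k < size s is v_{k+1} (bit nth false s k), k = size s is the star.
   Vertex at position i is added after all vertices at positions j > i, so
   two distinct vertices are adjacent iff the bit at the smaller position is 1. *)
Definition tadj (s : seq bool) : rel 'I_(size s).+1 :=
  fun x y => (x != y) && nth false s (minn x y).
Arguments tadj s x y : clear implicits.

Definition thr_seq (l : nat) (p z : nat -> nat) : seq bool :=
  flatten [seq nseq (p i) true ++ nseq (z i) false | i <- rev (iota 1 l)]
  ++ nseq (p 0) true.

Definition is_orientation n (adj : rel 'I_n) (O : {set 'I_n * 'I_n}) : bool :=
  [forall x, forall y,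
     (((x, y) \in O) ==> adj x y) &&
     (adj x y ==> (((x, y) \in O) (+) ((y, x) \in O)))].

Definition is_transitive n (O : {set 'I_n * 'I_n}) : bool :=
  [forall x, forall y, forall z,
     ((x, y) \in O) && ((y, z) \in O) ==> ((x, z) \in O)].

Definition is_trans_orientation n (adj : rel 'I_n) (O : {set 'I_n * 'I_n}) :=
  is_orientation adj O && is_transitive O.

Definition digraph_iso n (O1 O2 : {set 'I_n * 'I_n}) : bool :=
  [exists f : {perm 'I_n}, forall x, forall y,
     ((x, y) \in O1) == ((f x, f y) \in O2)].

Definition num_trans_orient n (adj : rel 'I_n) : nat :=
  #|[set [set O2 | is_trans_orientation adj O2 && digraph_iso O1 O2]
     | O1 in [set O | is_trans_orientation adj O]]|.

From mathcomp Require Import all_boot all_fingroup zify.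
Set Implicit Arguments. Unset Strict Implicit. Unset Printing Implicit Defensive.

(* The vertices with bit 1 and the star form a clique of dominating vertices;
   every other vertex v is adjacent exactly to the dominating vertices before
   it.  A transitive orientation linearly orders the clique, and the
   in-neighbours of each non-dominating v form an initial segment of N(v) in
   that order.  Hence the orientation is determined up to isomorphism by the
   in-degrees of the non-dominating vertices.  These are exactly the counts
   |N(v) ∩ L| for a "low" set L of dominating vertices, and every L occurs.  For
   the sequence 1^{p_l} 0^{z_l} ... 1^{p_0} the counts only depend on how many
   vertices of each block 1^{p_i}, i >= 1, lie in L, and the nonempty blocks
   0^{z_i} make these numbers readable from the counts: prod (p_i + 1) classes. *)

Lemma card_classes (T R : finType) (P : pred T) (e : rel T) (f : T -> R) :
  {in P &, forall x y, e x y = (f x == f y)} ->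
  #|[set [set y | P y && e x y] | x in [set x | P x]]| = #|f @: [set x | P x]|.
Proof.
move=> ef; pose cls (r : R) := [set y | P y && (f y == r)].
have -> : [set [set y | P y && e x y] | x in [set x | P x]] =
          (cls \o f) @: [set x | P x].
  apply: eq_in_imset => x; rewrite inE => Px; apply/setP => y; rewrite !inE.
  by case Py: (P y) => //=; rewrite ef // eq_sym.
rewrite imset_comp card_in_imset // => _ _ /imsetP[x Px ->] /imsetP[y Py ->] e_cls.
rewrite !inE in Px Py.
by move/setP/(_ x): e_cls; rewrite !inE Px eqxx => /esym/eqP.
Qed.

Lemma card_imset_undup (T R : finType) (f : T -> R) (A : {pred T}) :
  #|f @: A| = size (undup [seq f x | x <- enum A]).
Proof.
rewrite -(card_uniqP (undup_uniq _)); apply: eq_card => y.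
rewrite mem_undup; apply/imsetP/mapP => [[x xA ->]|[x xA ->]]; exists x => //.
  by rewrite mem_enum.
by rewrite -mem_enum.
Qed.

Lemma size_undup_map_ker (T R1 R2 : eqType) (f : T -> R1) (g : T -> R2) (e : seq T) :
    {in e &, forall x y, (f x == f y) = (g x == g y)} ->
  size (undup [seq f x | x <- e]) = size (undup [seq g x | x <- e]).
Proof.
elim: e => //= x e IHe fg.
have fg_e : {in e &, forall x y, (f x == f y) = (g x == g y)}.
  by move=> a b ae be; apply: fg; rewrite inE ?ae ?be orbT.
have -> : (f x \in [seq f y | y <- e]) = (g x \in [seq g y | y <- e]).
  apply/mapP/mapP => [[y ye /eqP exy]|[y ye /eqP exy]]; exists y => //; apply/eqP.
    by rewrite -fg ?inE ?ye ?eqxx ?orbT.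
  by rewrite fg ?inE ?ye ?eqxx ?orbT.
by case: ifP => _ //=; rewrite IHe.
Qed.

Lemma card_ord_ltn N (P : pred nat) v :
  v <= N -> #|[set a : 'I_N | (a < v) && P a]| = count P (iota 0 v).
Proof.
move=> le_vN.
have -> : #|[set a : 'I_N | (a < v) && P a]| = count (fun a => (a < v) && P a) (iota 0 N).
  rewrite -val_enum_ord count_map -size_filter -(card_uniqP (filter_uniq _ (enum_uniq _))).
  by apply: eq_card => a; rewrite inE mem_filter mem_enum andbT.
rewrite -(subnKC le_vN) iotaD count_cat add0n (eq_in_count (a2 := pred0) (s := iota v _)).
  by rewrite count_pred0 addn0; apply: eq_in_count => a; rewrite mem_iota => /andP[_ ->].
by move=> a; rewrite mem_iota => /andP[+ _]; rewrite leqNgt => /negbTE->.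
Qed.

Lemma map_nseq_const (T : Type) (c : nat) (e : seq T) : [seq c | _ <- e] = nseq (size e) c.
Proof. by elim: e => //= x e ->. Qed.

Lemma count_nth_take (w r : seq bool) :
  count (nth false (w ++ r)) (iota 0 (size w)) = count id w.
Proof.
rewrite -[in RHS](mkseq_nth false w) /mkseq count_map.
by apply: eq_in_count => a; rewrite mem_iota /= nth_cat => ->.
Qed.

Section ThresholdGraph.
Variable s : seq bool.
Local Notation n := (size s).
Local Notation V := 'I_n.+1.
Local Notation adj := (tadj s).

(* The star (default value of [nth]) counts as a dominating vertex. *)
Definition dominant (x : V) := nth true s x.

Definition dominants := [set x : V | dominant x].

Lemma adjC x y : adj x y = adj y x.
Proof. by rewrite /tadj eq_sym minnC. Qed.

Lemma adjnn x : adj x x = false.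
Proof. by rewrite /tadj eqxx. Qed.

Lemma adj_ltn (x y : V) : x < y -> adj x y = dominant x.
Proof.
move=> lt_xy; rewrite /tadj neq_ltn lt_xy (minn_idPl (ltnW lt_xy)) /dominant.
by apply: set_nth_default; apply: leq_trans lt_xy _; rewrite -ltnS.
Qed.

Lemma dominant_max : dominant ord_max.
Proof. by rewrite /dominant nth_default. Qed.

Lemma adj_dominant x y : dominant x -> dominant y -> x != y -> adj x y.
Proof.
move=> Dx Dy; rewrite neq_ltn => /orP[lt|lt]; first by rewrite adj_ltn.
by rewrite adjC adj_ltn.
Qed.

Lemma adj_nondominant v a : ~~ dominant v -> adj a v -> dominant a && (a < v).
Proof.
move=> Nv; case: (ltngtP a v) => [lt|lt|/val_inj ->].
- by rewrite adj_ltn // => ->.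
- by rewrite adjC adj_ltn // (negbTE Nv).
- by rewrite adjnn.
Qed.

Lemma nadj_nondominant x y : ~~ dominant x -> ~~ dominant y -> adj x y = false.
Proof.
by move=> Nx Ny; apply/negbTE/negP => /(adj_nondominant Ny) /andP[Dx _]; rewrite Dx in Nx.
Qed.

Definition nbhd x := [set y | adj x y].

Lemma nbhd_sub_nadj (x y : V) : x < y -> ~~ adj x y -> nbhd x \subset nbhd y.
Proof.
move=> lt_xy nxy; have Nx : ~~ dominant x by rewrite -(adj_ltn lt_xy).
apply/subsetP => u; rewrite !inE => axu.
case: (ltngtP u x) => [ux|xu|/val_inj eux].
- by rewrite adjC adj_ltn ?(ltn_trans ux) // -(adj_ltn ux) adjC.
- by rewrite adj_ltn // (negbTE Nx) in axu.
- by rewrite eux adjnn in axu.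
Qed.

Lemma nbhd_sub_adj (x y : V) : x < y -> adj x y -> nbhd y :\ x \subset nbhd x :\ y.
Proof.
move=> lt_xy axy; have Dx : dominant x by rewrite -(adj_ltn lt_xy).
apply/subsetP => u; rewrite !inE => /andP[ux ayu].
have -> /= : u != y by apply: contraTneq ayu => ->; rewrite adjnn.
case: (ltngtP u x) => [ux'|xu|/val_inj eux].
- by rewrite adjC adj_ltn // -(adj_ltn (ltn_trans ux' lt_xy)) adjC.
- by rewrite adj_ltn.
- by rewrite eux eqxx in ux.
Qed.

Lemma eq_nbhd_nadj x y : ~~ adj x y -> #|nbhd x| = #|nbhd y| -> nbhd x = nbhd y.
Proof.
move=> nxy cxy; case: (ltngtP x y) => [lt|lt|/val_inj -> //]; last apply: esym.
  by apply/eqP; rewrite eqEcard nbhd_sub_nadj //= cxy.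
by apply/eqP; rewrite eqEcard nbhd_sub_nadj 1?adjC //= cxy.
Qed.

(* A neighbour [w] of a non-dominant [v] is dominant and lies before it, so its
   neighbourhood also contains the star, which [v] misses. *)
Lemma card_nbhd_nadj v w : ~~ dominant v -> #|nbhd w| = #|nbhd v| -> ~~ adj v w.
Proof.
move=> Nv cvw; apply/negP => avw.
have /andP[Dw lt_wv] : dominant w && (w < v) by apply: adj_nondominant; rewrite // adjC.
have eqD : nbhd v :\ w = nbhd w :\ v.
  apply/eqP; rewrite eqEcard nbhd_sub_adj 1?adjC //=.
  have := cardsD1 w (nbhd v); have := cardsD1 v (nbhd w).
  rewrite !inE avw adjC avw cvw.
  by move=> -> /eqP; rewrite eqn_add2l => /eqP ->.
have : ord_max \in nbhd w :\ v.
  rewrite !inE adj_dominant ?dominant_max ?andbT //.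
    by apply: contraNneq Nv => <-; apply: dominant_max.
  by rewrite neq_ltn (leq_trans lt_wv) // -ltnS.
rewrite -eqD !inE => /andP[_]; rewrite adjC => /(adj_nondominant Nv) /andP[_].
by rewrite ltnNge -ltnS ltn_ord.
Qed.

Lemma card_set_ltn (A : {set V}) : #|A| < n.+2.
Proof. by have := max_card (mem A); rewrite card_ord. Qed.

Section TransitiveOrientation.
Variable O : {set V * V}.
Hypothesis tO : is_trans_orientation adj O.

Lemma arc_adj x y : (x, y) \in O -> adj x y.
Proof.
by case/andP: tO => /forallP/(_ x)/forallP/(_ y)/andP[/implyP].
Qed.

Lemma adj_arc_xor x y : adj x y -> ((x, y) \in O) (+) ((y, x) \in O).
Proof.
by case/andP: tO => /forallP/(_ x)/forallP/(_ y)/andP[_ /implyP].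
Qed.

Lemma arc_trans x y z : (x, y) \in O -> (y, z) \in O -> (x, z) \in O.
Proof.
case/andP: tO => _ /forallP/(_ x)/forallP/(_ y)/forallP/(_ z)/implyP H xy yz.
by apply: H; rewrite xy yz.
Qed.

Lemma arc_irr x : (x, x) \notin O.
Proof. by apply/negP => /arc_adj; rewrite adjnn. Qed.

Lemma adj_arcE x y : adj x y = ((x, y) \in O) || ((y, x) \in O).
Proof.
apply/idP/orP => [/adj_arc_xor|[/arc_adj //|/arc_adj]]; last by rewrite adjC.
by case: ((x, y) \in O) => /=; [left|right].
Qed.

Definition in_nbhd v := [set a | (a, v) \in O].
Definition out_nbhd v := [set a | (v, a) \in O].

Lemma card_out_nbhd v : #|out_nbhd v| = #|nbhd v| - #|in_nbhd v|.
Proof.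
have -> : nbhd v = out_nbhd v :|: in_nbhd v.
  by apply/setP => a; rewrite !inE adj_arcE.
rewrite cardsU; suff -> : out_nbhd v :&: in_nbhd v = set0 by rewrite cards0 subn0 addnK.
apply/setP => a; rewrite !inE; apply/negbTE/negP => /andP[va av].
by have := arc_irr v; rewrite (arc_trans va av).
Qed.

(* Two non-adjacent vertices with a common neighbourhood have the same
   in-neighbours: an arc [y -> a] together with [a -> x] would force [y -> x]. *)
Lemma in_nbhd_twins x y : ~~ adj x y -> nbhd x = nbhd y -> in_nbhd x = in_nbhd y.
Proof.
have sub u w : ~~ adj u w -> nbhd u = nbhd w -> in_nbhd u \subset in_nbhd w.
  move=> nuw eN; apply/subsetP => a; rewrite !inE => au.
  have : a \in nbhd w by rewrite -eN inE adjC arc_adj.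
  rewrite inE adj_arcE orbC; case/orP => // wa.
  by have := arc_adj (arc_trans wa au); rewrite adjC (negbTE nuw).
by move=> nxy eN; apply/eqP; rewrite eqEsubset !sub // adjC.
Qed.

Definition rank x := #|[set y | dominant y && ((y, x) \in O)]|.

Lemma rank_ltn x y : dominant x -> (x, y) \in O -> rank x < rank y.
Proof.
move=> Dx xy; apply: proper_card; apply/properP; split.
  by apply/subsetP => b; rewrite !inE => /andP[-> /arc_trans->].
by exists x; rewrite !inE ?Dx ?xy ?(negbTE (arc_irr x)).
Qed.

Lemma dominant_arcE x y :
  dominant x -> dominant y -> ((x, y) \in O) = (rank x < rank y).
Proof.
move=> Dx Dy; apply/idP/idP; first exact: rank_ltn.
case: (eqVneq x y) => [-> | nxy]; first by rewrite ltnn.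
have := adj_arc_xor (adj_dominant Dx Dy nxy).
case: ((x, y) \in O) => //= /(rank_ltn Dy) lt_yx lt_xy.
by have := ltn_trans lt_xy lt_yx; rewrite ltnn.
Qed.

Lemma rank_inj : {in dominants &, injective rank}.
Proof.
move=> x y; rewrite !inE => Dx Dy exy; apply/eqP; apply: contraT => nxy.
by have := adj_arc_xor (adj_dominant Dx Dy nxy); rewrite !dominant_arcE // exy ltnn.
Qed.

Lemma rank_ltn_card x : dominant x -> rank x < #|dominants|.
Proof.
move=> Dx; apply: proper_card; apply/properP; split.
  by apply/subsetP => b; rewrite !inE => /andP[].
by exists x; rewrite !inE ?Dx // (negbTE (arc_irr x)).
Qed.

Lemma rank_surj r : r < #|dominants| -> exists2 y, dominant y & rank y = r.
Proof.
move=> lt_r; set ranks := [seq rank y | y <- enum dominants].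
have uniq_ranks : uniq ranks.
  by rewrite map_inj_in_uniq ?enum_uniq // => x y; rewrite !mem_enum; apply: rank_inj.
have sub_ranks : {subset ranks <= iota 0 #|dominants|}.
  move=> k /mapP[y]; rewrite mem_enum inE => Dy ->.
  by rewrite mem_iota rank_ltn_card.
have [|_ eq_ranks] := uniq_min_size uniq_ranks sub_ranks.
  by rewrite size_iota size_map -cardE.
have : r \in ranks by rewrite eq_ranks mem_iota.
by case/mapP => y; rewrite mem_enum inE => Dy ->; exists y.
Qed.

(* On the dominant clique [O] is a linear order, and [rank] is the position in it. *)
Lemma mem_downward_closed (S : {set V}) x : S \subset dominants ->
    (forall a b, a \in S -> dominant b -> (b, a) \in O -> b \in S) ->
  dominant x -> (x \in S) = (rank x < #|S|).
Proof.
move=> SD clS Dx; case xS: (x \in S).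
  apply/esym; apply: proper_card; apply/properP; split.
    by apply/subsetP => b; rewrite !inE => /andP[Db bx]; apply: clS bx.
  by exists x; rewrite // !inE Dx (negbTE (arc_irr x)).
apply/esym/negbTE; rewrite -leqNgt; apply: subset_leq_card.
apply/subsetP => a aS; have Da : dominant a by have := subsetP SD a aS; rewrite inE.
rewrite inE Da /=.
have ax : a != x by apply: contraTneq aS => ->; rewrite xS.
have := adj_arc_xor (adj_dominant Da Dx ax); case: ((a, x) \in O) => //= xa.
by rewrite (clS _ _ aS Dx xa) in xS.
Qed.

Lemma in_nbhd_sub v : ~~ dominant v -> in_nbhd v \subset dominants.
Proof.
by move=> Nv; apply/subsetP => a; rewrite !inE => /arc_adj/(adj_nondominant Nv)/andP[].
Qed.

Lemma out_nbhd_sub v : ~~ dominant v -> out_nbhd v \subset dominants.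
Proof.
move=> Nv; apply/subsetP => a; rewrite !inE => /arc_adj.
by rewrite adjC => /(adj_nondominant Nv)/andP[].
Qed.

Lemma in_arc_rankE v a : ~~ dominant v ->
  ((a, v) \in O) = dominant a && (rank a < #|in_nbhd v|).
Proof.
move=> Nv; case Da: (dominant a) => /=.
  rewrite -mem_downward_closed ?inE ?in_nbhd_sub // => x b; rewrite !inE => xv _ bx.
  exact: arc_trans bx xv.
by apply/negbTE/negP => /arc_adj/(adj_nondominant Nv); rewrite Da.
Qed.

Lemma out_arc_rankE v a : ~~ dominant v ->
  ((v, a) \in O) = dominant a && (#|dominants| - #|out_nbhd v| <= rank a).
Proof.
move=> Nv; case Da: (dominant a) => /=; last first.
  by apply/negbTE/negP => /arc_adj; rewrite adjC => /(adj_nondominant Nv); rewrite Da.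
have card_low : #|dominants :\: out_nbhd v| = #|dominants| - #|out_nbhd v|.
  by rewrite cardsD (setIidPr (out_nbhd_sub Nv)).
rewrite -card_low leqNgt -mem_downward_closed ?subsetDl //.
  by rewrite !inE Da andbT negbK.
move=> x b; rewrite !inE => /andP[vx _] -> bx; rewrite andbT.
by apply: contra vx => vb; apply: arc_trans vb bx.
Qed.

End TransitiveOrientation.

(* A complete isomorphism invariant of transitive orientations, see [digraph_isoE]. *)
Definition indegs (O : {set V * V}) : {ffun V -> 'I_n.+2} :=
  [ffun v => if dominant v then ord0 else inord #|in_nbhd O v|].

Lemma indegsE O v : ~~ dominant v -> indegs O v = #|in_nbhd O v| :> nat.
Proof. by move=> Nv; rewrite ffunE (negbTE Nv) inordK ?card_set_ltn. Qed.

Section Isomorphism.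
Variables (O1 O2 : {set V * V}) (f : {perm V}).
Hypotheses (tO1 : is_trans_orientation adj O1) (tO2 : is_trans_orientation adj O2).
Hypothesis arcf : forall x y, ((x, y) \in O1) = ((f x, f y) \in O2).

Let image_perm (P Q : V -> V -> bool) v :
  (forall a, P (f a) (f v) = Q a v) -> [set a | P a (f v)] = f @: [set a | Q a v].
Proof.
move=> PQ; apply/setP => a; rewrite -[a](permKV f) mem_imset ?inE //.
exact: perm_inj.
Qed.

Lemma iso_adj x y : adj (f x) (f y) = adj x y.
Proof. by rewrite (adj_arcE tO2) (adj_arcE tO1) !arcf. Qed.

Lemma iso_nbhd v : nbhd (f v) = f @: nbhd v.
Proof.
have -> : nbhd (f v) = [set a | adj a (f v)] by apply/setP => a; rewrite !inE adjC.
have -> : nbhd v = [set a | adj a v] by apply/setP => a; rewrite !inE adjC.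
by apply: image_perm => a; rewrite iso_adj.
Qed.

Lemma iso_in_nbhd v : in_nbhd O2 (f v) = f @: in_nbhd O1 v.
Proof.
by apply: (@image_perm (fun a b => (a, b) \in O2) (fun a b => (a, b) \in O1)) => a;
  rewrite arcf.
Qed.

(* [f v] has the same neighbourhood size as the non-dominant [v], hence is a
   non-adjacent twin of [v] and so has the same in-neighbours in [O2]. *)
Lemma iso_indegs : indegs O1 = indegs O2.
Proof.
apply/ffunP => v; apply: val_inj; rewrite !ffunE; case: ifP => //= /negbT Nv.
have card_nbhd : #|nbhd (f v)| = #|nbhd v|.
  by rewrite iso_nbhd card_imset //; apply: perm_inj.
have nvf := card_nbhd_nadj Nv card_nbhd.
rewrite (in_nbhd_twins tO2 nvf (eq_nbhd_nadj nvf (esym card_nbhd))).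
by rewrite iso_in_nbhd card_imset //; apply: perm_inj.
Qed.

End Isomorphism.

Lemma rank_matching O1 O2 :
    is_trans_orientation adj O1 -> is_trans_orientation adj O2 ->
  exists g : {perm V}, (forall x, ~~ dominant x -> g x = x) /\
    forall x, dominant x -> dominant (g x) && (rank O2 (g x) == rank O1 x).
Proof.
move=> tO1 tO2.
pose g0 x := if dominant x then odflt x [pick y | dominant y && (rank O2 y == rank O1 x)]
             else x.
have g0N x : ~~ dominant x -> g0 x = x by rewrite /g0 => /negbTE->.
have g0D x : dominant x -> dominant (g0 x) && (rank O2 (g0 x) == rank O1 x).
  move=> Dx; rewrite /g0 Dx; case: pickP => [y //|none].
  have [y Dy ry] := rank_surj tO2 (rank_ltn_card tO1 Dx).
  by have := none y; rewrite Dy ry eqxx.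
have g0_inj : injective g0.
  move=> x y; case Dx: (dominant x); case Dy: (dominant y).
  - move=> exy; apply: (rank_inj tO1); rewrite ?inE //.
    have /andP[_ /eqP <-] := g0D x Dx; have /andP[_ /eqP <-] := g0D y Dy.
    by rewrite exy.
  - by have /andP[+ _] := g0D x Dx; rewrite (g0N y) ?Dy // => + exy; rewrite exy Dy.
  - by have /andP[+ _] := g0D y Dy; rewrite (g0N x) ?Dx // => + exy; rewrite -exy Dx.
  - by rewrite (g0N x) ?Dx // (g0N y) ?Dy.
by exists (perm g0_inj); split=> x; rewrite permE; [apply: g0N | apply: g0D].
Qed.

(* Conversely, matching the dominant clique by rank is an isomorphism: the
   arcs at a non-dominant vertex are determined by its in-degree and ranks. *)
Lemma eq_indegs_iso O1 O2 :
    is_trans_orientation adj O1 -> is_trans_orientation adj O2 ->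
  indegs O1 = indegs O2 -> digraph_iso O1 O2.
Proof.
move=> tO1 tO2 eq_indegs.
have card_in v : ~~ dominant v -> #|in_nbhd O1 v| = #|in_nbhd O2 v|.
  by move=> Nv; rewrite -!indegsE // eq_indegs.
have [g [gN gD]] := rank_matching tO1 tO2.
apply/existsP; exists g; apply/forallP => x; apply/forallP => y; apply/eqP.
case Dx: (dominant x); case Dy: (dominant y).
- have /andP[Dgx /eqP rx] := gD x Dx; have /andP[Dgy /eqP ry] := gD y Dy.
  by rewrite (dominant_arcE tO1) // (dominant_arcE tO2) // rx ry.
- have /andP[Dgx /eqP rx] := gD x Dx; have Ny : ~~ dominant y by rewrite Dy.
  by rewrite (gN y) // (in_arc_rankE tO1) // (in_arc_rankE tO2) // Dx Dgx rx card_in.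
- have /andP[Dgy /eqP ry] := gD y Dy; have Nx : ~~ dominant x by rewrite Dx.
  rewrite (gN x) // (out_arc_rankE tO1) // (out_arc_rankE tO2) // Dy Dgy ry.
  by rewrite !card_out_nbhd // card_in.
- have Nx : ~~ dominant x by rewrite Dx.
  have Ny : ~~ dominant y by rewrite Dy.
  rewrite (gN x) // (gN y) //.
  by apply/idP/idP => [/(arc_adj tO1)|/(arc_adj tO2)]; rewrite nadj_nondominant.
Qed.

Lemma digraph_isoE O1 O2 :
    is_trans_orientation adj O1 -> is_trans_orientation adj O2 ->
  digraph_iso O1 O2 = (indegs O1 == indegs O2).
Proof.
move=> tO1 tO2; apply/idP/eqP; last exact: eq_indegs_iso.
case/existsP => f /forallP arcf; apply: (iso_indegs tO1 tO2 (f := f)) => x y.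
exact/eqP/(forallP (arcf x)).
Qed.

(* A transitive orientation is determined up to isomorphism by its set of
   low vertices: the dominant vertices with an arc into some non-dominant one. *)
Definition low_set (O : {set V * V}) :=
  [set a | [exists w, ~~ dominant w && ((a, w) \in O)]].

Definition low_indegs (L : {set V}) : {ffun V -> 'I_n.+2} :=
  [ffun v => if dominant v then ord0 else inord #|nbhd v :&: L|].

Lemma indegs_low_set O : is_trans_orientation adj O -> indegs O = low_indegs (low_set O).
Proof.
move=> tO; apply/ffunP => v; rewrite !ffunE; case: ifP => // /negbT Nv.
congr inord; apply: eq_card => a; rewrite !inE.
apply/idP/andP => [av | [va /existsP[w /andP[Nw aw]]]].
  by split; [rewrite adjC (arc_adj tO av) | apply/existsP; exists v; rewrite Nv].
case av: ((a, v) \in O) => //.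
have va' : (v, a) \in O by rewrite (adj_arcE tO) av orbF in va.
by have := arc_adj tO (arc_trans tO va' aw); rewrite nadj_nondominant.
Qed.

(* Realising a given low set [L]: order the clique by [low_key] ([L] first,
   increasingly, then the rest decreasingly, as transitivity at non-dominant
   vertices requires) and direct every edge at a non-dominant vertex out of [L]. *)
Definition low_key (L : {set V}) (x : V) : nat :=
  if x \in L then nat_of_ord x else n.+1 + (n - x).

Definition low_arc (L : {set V}) (x y : V) :=
  adj x y && if dominant x then (if dominant y then low_key L x < low_key L y else x \in L)
             else y \notin L.

Definition low_orient (L : {set V}) : {set V * V} := [set xy | low_arc L xy.1 xy.2].

Section LowOrientation.
Variable L : {set V}.

Lemma low_key_inj : injective (low_key L).
Proof.
move=> x y; have := ltn_ord x; have := ltn_ord y.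
by rewrite /low_key; case: (x \in L); case: (y \in L) => ? ? ?; apply: ord_inj; lia.
Qed.

Lemma low_key_ltn_mem x y : x \in L -> y \notin L -> low_key L x < low_key L y.
Proof. by rewrite /low_key => -> /negbTE->; have := ltn_ord x; lia. Qed.

Lemma low_key_ltn_inL x y : low_key L x < low_key L y -> y \in L -> (x \in L) && (x < y).
Proof.
rewrite /low_key => + yL; rewrite yL; have := ltn_ord y.
by case: (x \in L) => //= ? ?; lia.
Qed.

Lemma low_key_ltn_notinL x y :
  low_key L x < low_key L y -> x \notin L -> (y \notin L) && (y < x).
Proof.
rewrite /low_key => + /negbTE xL; rewrite xL; have := ltn_ord x; have := ltn_ord y.
by case: (y \in L) => //= ? ? ?; lia.
Qed.

Lemma low_orient_orientation : is_orientation adj (low_orient L).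
Proof.
apply/forallP => x; apply/forallP => y; rewrite !inE /low_arc /=; apply/andP; split.
  by apply/implyP => /andP[].
apply/implyP => axy; rewrite axy adjC axy /=.
case Dx: (dominant x); case Dy: (dominant y); last by rewrite nadj_nondominant ?Dx ?Dy in axy.
- have nxy : low_key L x != low_key L y.
    by apply: contraTneq axy => /low_key_inj ->; rewrite adjnn.
  by case: ltngtP nxy.
- by case: (x \in L).
- by case: (y \in L).
Qed.

Lemma low_orient_transitive : is_transitive (low_orient L).
Proof.
apply/forallP => x; apply/forallP => y; apply/forallP => z; rewrite !inE /low_arc /=.
apply/implyP => /andP[/andP[axy Hxy] /andP[ayz Hyz]].
case Dy: (dominant y) in Hxy Hyz.
- case Dx: (dominant x) in Hxy; case Dz: (dominant z) in Hyz.
  + have kxz := ltn_trans Hxy Hyz.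
    by rewrite adj_dominant ?Dx ?Dz //; apply: contraTneq kxz => ->; rewrite ltnn.
  + have /andP[_ lt_yz] : dominant y && (y < z) by apply: adj_nondominant; rewrite ?Dz.
    have /andP[xL lt_xy] := low_key_ltn_inL Hxy Hyz.
    by rewrite adj_ltn ?(ltn_trans lt_xy) // Dx Dz xL.
  + have /andP[_ lt_yx] : dominant y && (y < x).
      by apply: adj_nondominant; rewrite ?Dx // adjC.
    have /andP[zL lt_zy] := low_key_ltn_notinL Hyz Hxy.
    by rewrite adjC adj_ltn ?(ltn_trans lt_zy) // Dx Dz zL.
  + by rewrite Hyz in Hxy.
- have /andP[Dx _] : dominant x && (x < y) by apply: adj_nondominant; rewrite ?Dy.
  have /andP[Dz _] : dominant z && (z < y) by apply: adj_nondominant; rewrite ?Dy // adjC.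
  rewrite Dx in Hxy; rewrite Dx Dz adj_dominant ?low_key_ltn_mem //.
  by apply: contraTneq Hxy => ->.
Qed.

Lemma low_orient_trans_orientation : is_trans_orientation adj (low_orient L).
Proof. by rewrite /is_trans_orientation low_orient_orientation low_orient_transitive. Qed.

Lemma indegs_low_orient : indegs (low_orient L) = low_indegs L.
Proof.
apply/ffunP => v; rewrite !ffunE; case: ifP => // /negbT Nv.
congr inord; apply: eq_card => a; rewrite !inE /low_arc /= adjC (negbTE Nv).
case va: (adj v a) => //=; rewrite adjC in va.
by have /andP[-> _] := adj_nondominant Nv va.
Qed.

End LowOrientation.

Lemma indegs_image :
  indegs @: [set O | is_trans_orientation adj O] = low_indegs @: [set: {set V}].
Proof.
apply/setP => I; apply/imsetP/imsetP => [[O tO ->]|[L _ ->]].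
  by rewrite inE in tO; exists (low_set O); rewrite ?indegs_low_set.
by exists (low_orient L); rewrite ?inE ?low_orient_trans_orientation ?indegs_low_orient.
Qed.

Lemma num_trans_orient_low : num_trans_orient adj = #|low_indegs @: [set: {set V}]|.
Proof.
rewrite /num_trans_orient -indegs_image; apply: card_classes => O1 O2.
exact: digraph_isoE.
Qed.

End ThresholdGraph.

(* A bit sequence [m] encodes the set of positions [i] with [nth false m i]. *)
Fixpoint bitseqs k : seq (seq bool) :=
  if k is k'.+1 then [seq b :: m | b <- [:: true; false], m <- bitseqs k'] else [:: [::]].

Lemma mem_bitseqs k m : (m \in bitseqs k) = (size m == k).
Proof.
have mem_cons (c b : bool) m' e : (b :: m' \in [seq c :: x | x <- e]) = (b == c) && (m' \in e).
  by apply/mapP/andP => [[x xe [-> ->]] | [/eqP -> me]]; last exists m'.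
elim: k m => [|k IHk] [|b m] //=; rewrite !mem_cat orbF.
  by apply/negbTE; rewrite negb_or; apply/andP; split; apply/mapP => -[].
by rewrite !mem_cons eqSS -IHk; case: b; rewrite ?orbF.
Qed.

Definition marked_before (s m : seq bool) k :=
  count (fun a => nth true s a && nth false m a) (iota 0 k).

(* The in-degree sequence of [low_orient] for the low set marked by [m], as a
   sequence over the vertices other than the star. *)
Definition profile (s m : seq bool) : seq nat :=
  [seq if nth true s v then 0 else marked_before s m v | v <- iota 0 (size s)].

Definition profiles s := undup [seq profile s m | m <- bitseqs (size s)].

Definition nprofiles s := size (profiles s).

Definition bitseq_of_set n (L : {set 'I_n.+1}) := mkseq (fun i => inord i \in L) n.

Lemma low_indegs_profile s (L : {set 'I_(size s).+1}) (v : 'I_(size s).+1) :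
  low_indegs L v = nth 0 (profile s (bitseq_of_set L)) v :> nat.
Proof.
rewrite ffunE /profile /dominant; case: (ltnP v (size s)) => [lt_vs|]; last first.
  by move=> le_sv; rewrite !nth_default ?size_map ?size_iota.
rewrite (nth_map 0) ?size_iota // nth_iota // add0n; case: ifP => // /negbT Nv.
rewrite inordK ?card_set_ltn // /marked_before -(card_ord_ltn _ (ltnW (ltn_ord v))).
apply: eq_card => a; rewrite !inE.
case: (ltngtP a v) => [lt_av|lt_va|/val_inj ->]; last by rewrite adjnn.
  rewrite adjC adj_ltn // /bitseq_of_set nth_mkseq ?inord_val //.
  exact: ltn_trans lt_av lt_vs.
by rewrite adj_ltn // /dominant (negbTE Nv).
Qed.

Lemma size_profile s m : size (profile s m) = size s.
Proof. by rewrite size_map size_iota. Qed.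

Lemma bitseq_of_setP n :
  [seq bitseq_of_set L | L <- enum [set: {set 'I_n.+1}]] =i bitseqs n.
Proof.
move=> m; rewrite mem_bitseqs; apply/mapP/eqP => [[L _ ->]|sm]; first exact: size_mkseq.
exists [set i : 'I_n.+1 | nth false m i]; first by rewrite mem_enum inE.
apply: (@eq_from_nth _ false) => [|i]; rewrite /bitseq_of_set ?size_mkseq // sm => lt_in.
by rewrite nth_mkseq // inE inordK // ltnS ltnW.
Qed.

Lemma card_low_indegs s : #|low_indegs (s := s) @: [set: {set 'I_(size s).+1}]| = nprofiles s.
Proof.
rewrite card_imset_undup (size_undup_map_ker (g := fun L => profile s (bitseq_of_set L))).
  rewrite /nprofiles map_comp; apply/perm_size/perm_undup/eq_mem_map.
  exact: bitseq_of_setP.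
move=> L L' _ _; apply/eqP/eqP => [eqI | eqP_].
  apply: (@eq_from_nth _ 0); rewrite !size_profile // => v lt_vs.
  by rewrite -!(low_indegs_profile _ (Ordinal (leqW lt_vs))) eqI.
by apply/ffunP => v; apply: val_inj; rewrite /= !low_indegs_profile eqP_.
Qed.

Definition shift_nondom (t : seq bool) (c : nat) (y : seq nat) :=
  [seq if nth true t w then nth 0 y w else nth 0 y w + c | w <- iota 0 (size t)].

Lemma shift_nondom_inj t c y y' : size y = size t -> size y' = size t ->
  shift_nondom t c y = shift_nondom t c y' -> y = y'.
Proof.
move=> sy sy' e; apply: (@eq_from_nth _ 0) => [|w]; first by rewrite sy sy'.
rewrite sy => lt_wt; have := congr1 (nth 0 ^~ w) e.
by rewrite /= !(nth_map 0) ?size_iota // nth_iota //; case: ifP => // _ /addIn.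
Qed.

Lemma marked_before_cat u t m k :
  marked_before (u ++ t) m (size u + k) =
  marked_before u m (size u) + marked_before t (drop (size u) m) k.
Proof.
rewrite /marked_before iotaD count_cat; congr (_ + _).
  by apply: eq_in_count => a; rewrite mem_iota => /andP[_ lt_au]; rewrite nth_cat lt_au.
rewrite add0n -[size u]addn0 iotaDl count_map addn0.
by apply: eq_count => a /=; rewrite nth_cat ltnNge leq_addr /= addKn nth_drop.
Qed.

Lemma profile_cat u t m :
  profile (u ++ t) m =
  profile u m ++ shift_nondom t (marked_before u m (size u)) (profile t (drop (size u) m)).
Proof.
rewrite {1}/profile size_cat iotaD map_cat; congr (_ ++ _).
  apply/eq_in_map => v; rewrite mem_iota => /andP[_ lt_vu] /=.
  rewrite nth_cat lt_vu; case: ifP => // _.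
  apply: eq_in_count => a; rewrite mem_iota => /andP[_ lt_av].
  by rewrite nth_cat (ltn_trans lt_av lt_vu).
rewrite add0n -[size u]addn0 iotaDl addn0 -map_comp /shift_nondom; apply/eq_in_map => w.
rewrite mem_iota => /andP[_ lt_wt] /=.
rewrite nth_cat ltnNge leq_addr /= addKn /profile (nth_map 0) ?size_iota //.
by rewrite nth_iota // add0n; case: ifP => // _; rewrite marked_before_cat addnC.
Qed.

Lemma profile_ones p m : profile (nseq p true) m = nseq p 0.
Proof.
rewrite /profile size_nseq (eq_map (g := fun _ => 0)) ?map_nseq_const ?size_iota //.
by move=> v; rewrite nth_nseq if_same.
Qed.

Lemma marked_before_zeros z m k : k <= z -> marked_before (nseq z false) m k = 0.
Proof.
move=> le_kz; rewrite /marked_before (eq_in_count (a2 := pred0)) ?count_pred0 // => a.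
by rewrite mem_iota nth_nseq => /andP[_ lt_ak]; rewrite (leq_trans lt_ak le_kz).
Qed.

Lemma profile_zeros z m : profile (nseq z false) m = nseq z 0.
Proof.
rewrite /profile size_nseq.
transitivity [seq 0 | _ <- iota 0 z]; last by rewrite map_nseq_const size_iota.
apply/eq_in_map => v.
by rewrite mem_iota nth_nseq => /andP[_ lt_vz]; rewrite lt_vz marked_before_zeros // ltnW.
Qed.

Lemma marked_before_ones p m :
  marked_before (nseq p true) m p = count (nth false m) (iota 0 p).
Proof.
rewrite /marked_before; apply: eq_in_count => a; rewrite mem_iota => /andP[_ lt_ap].
by rewrite nth_nseq lt_ap.
Qed.

Lemma shift_nondom_zeros z c : shift_nondom (nseq z false) c (nseq z 0) = nseq z c.
Proof.
rewrite /shift_nondom size_nseq.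
transitivity [seq c | _ <- iota 0 z]; last by rewrite map_nseq_const size_iota.
apply/eq_in_map => w.
by rewrite mem_iota => /andP[_ lt_wz]; rewrite !nth_nseq lt_wz.
Qed.

Lemma profile_block p z t m :
  profile (nseq p true ++ nseq z false ++ t) m =
  nseq p 0 ++ nseq z (count (nth false m) (iota 0 p)) ++
  shift_nondom t (count (nth false m) (iota 0 p)) (profile t (drop (p + z) m)).
Proof.
rewrite catA !profile_cat profile_ones profile_zeros size_cat marked_before_cat.
rewrite !size_nseq marked_before_ones marked_before_zeros // addn0.
by rewrite shift_nondom_zeros catA.
Qed.

Section BlockProfiles.
Variables (p z : nat) (t : seq bool).

Local Notation block := (nseq p true ++ nseq z false ++ t).

Let glue c y := nseq p 0 ++ nseq z c ++ shift_nondom t c y.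

Lemma mem_profiles_block :
  [seq profile block m | m <- bitseqs (size block)] =i
  [seq glue c y | c <- iota 0 p.+1, y <- profiles t].
Proof.
move=> x; apply/mapP/allpairsP => [[m] | [[c y] [c_in y_in ->]]].
  rewrite mem_bitseqs => /eqP size_m ->; rewrite profile_block.
  exists (count (nth false m) (iota 0 p), profile t (drop (p + z) m)); split=> //.
    by rewrite mem_iota ltnS (leq_trans (count_size _ _)) ?size_iota.
  rewrite /profiles mem_undup; apply: map_f.
  by rewrite mem_bitseqs size_drop size_m !size_cat !size_nseq addnA addKn.
move: y_in; rewrite /profiles mem_undup => /mapP[m]; rewrite mem_bitseqs => /eqP size_m ->.
have le_cp : c <= p by move: c_in; rewrite mem_iota ltnS.
have size_w : size (nseq c true ++ nseq (p - c) false) = p.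
  by rewrite size_cat !size_nseq subnKC.
set M := (nseq c true ++ nseq (p - c) false) ++ nseq z false ++ m.
have drop_M : drop (p + z) M = m by rewrite /M catA drop_size_cat // size_cat size_w size_nseq.
have count_M : count (nth false M) (iota 0 p) = c.
  by rewrite /M -[in iota 0 p]size_w count_nth_take count_cat !count_nseq /= mul1n mul0n addn0.
exists M; last by rewrite profile_block drop_M count_M.
by rewrite mem_bitseqs !size_cat !size_nseq size_m subnKC.
Qed.

Hypothesis z_gt0 : 0 < z.

(* The first vertex of the zero block reads off [c]; the rest reads off [y]. *)
Lemma glue_inj c c' y y' : size y = size t -> size y' = size t ->
  glue c y = glue c' y' -> (c, y) = (c', y').
Proof.
move=> size_y size_y' eq_glue.
have eq_c : c = c'.
  have := congr1 (nth 0 ^~ p) eq_glue.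
  by rewrite /glue /= !nth_cat !size_nseq ltnn subnn z_gt0 !nth_nseq z_gt0.
subst c'; congr pair; apply: (shift_nondom_inj (c := c)) size_y size_y' _.
have drop_glue c'' y'' : drop (p + z) (glue c'' y'') = shift_nondom t c'' y''.
  by rewrite /glue catA drop_size_cat // size_cat !size_nseq.
by move: (congr1 (drop (p + z)) eq_glue); rewrite !drop_glue.
Qed.

Lemma nprofiles_block : nprofiles block = p.+1 * nprofiles t.
Proof.
rewrite /nprofiles {1}/profiles (perm_size (perm_undup mem_profiles_block)) undup_id.
  by rewrite size_allpairs size_iota.
apply: allpairs_uniq; [exact: iota_uniq | exact: undup_uniq |].
move=> [c y] [c' y'] /allpairsP[[? y1] [_ y1_in [_ ->]]] /allpairsP[[? y2] [_ y2_in [_ ->]]].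
have size_prof y'' : y'' \in profiles t -> size y'' = size t.
  by rewrite mem_undup => /mapP[m _ ->]; rewrite size_profile.
by apply: glue_inj; apply: size_prof.
Qed.

End BlockProfiles.

Lemma nprofiles_ones q : nprofiles (nseq q true) = 1.
Proof.
rewrite /nprofiles /profiles size_nseq (perm_size (perm_undup (s2 := [:: nseq q 0]) _)) //.
move=> y; rewrite inE; apply/mapP/eqP => [[m _ ->]|->]; first exact: profile_ones.
by exists (nseq q true); rewrite ?mem_bitseqs ?size_nseq ?profile_ones.
Qed.

Lemma thr_seqS l p z :
  thr_seq l.+1 p z = nseq (p l.+1) true ++ nseq (z l.+1) false ++ thr_seq l p z.
Proof.
rewrite /thr_seq.
have -> : iota 1 l.+1 = rcons (iota 1 l) l.+1.
  by rewrite -cats1 -[in LHS](addn1 l) iotaD add1n.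
by rewrite rev_rcons /= -!catA.
Qed.

Lemma nprofiles_thr_seq l p z : (forall i, 1 <= i <= l -> 0 < z i) ->
  nprofiles (thr_seq l p z) = \prod_(1 <= i < l.+1) (p i).+1.
Proof.
elim: l => [|l IHl] z_gt0; first by rewrite big_geq // nprofiles_ones.
rewrite thr_seqS nprofiles_block ?z_gt0 ?leqnn // big_nat_recr //= mulnC IHl //.
by move=> i /andP[le_1i le_il]; rewrite z_gt0 // le_1i ltnW.
Qed.

Theorem theorem3p4 (l : nat) (p z : nat -> nat)
  (hz : forall i, 1 <= i <= l -> 0 < z i) :
  num_trans_orient (tadj (thr_seq l p z)) = \prod_(1 <= i < l.+1) (p i).+1.
Proof. by rewrite num_trans_orient_low card_low_indegs nprofiles_thr_seq. Qed.
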